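(* Define $f:\mathbb N\to\mathbb N$ by $$f(n)=\begin{cases}\lfloor\varphi n\rfloor+1, & n\in R_{0,0},\\ \lfloor(\varphi-1)n\rfloor, & n\in R_{1,0}.\end{cases}$$ Then $f$ is an $R_{i,j}$-permutation of $\mathbb N$ of order $2$ (i.e. $f$ is a bijection of $\mathbb N$, $f\circ f=\mathrm{id}$ and $f\neq\mathrm{id}$). Its first values are $2,1,5,7,3,10,4,13,15,6,\dots$.
   Context: $\mathbb N=\{1,2,\dots\}$, $\varphi=\frac{1+\sqrt5}{2}$. $F$ denotes the Fibonacci numbers ($F(0)=0,F(1)=F(2)=1$). $R_{i,j}$ ($i\in\mathbb Z^{\ge0},j\in\mathbb Z$) is the range of $n\mapsto F(i+1)\lfloor n\varphi\rfloor+F(i)n-j$, $n\in\mathbb N$; thus $R_{0,0}=\{\lfloor n\varphi\rfloor\}$ and $R_{1,0}=\{\lfloor n\varphi^2\rfloor\}$. An $R_{i,j}$-permutation is a permutation $\pi$ of $\mathbb N$ defined piecewise on a finite partition of $\mathbb N$ into sets $R_{i,j}$, with $\pi(n)=\lfloor(a\varphi+b)n+c\rfloor$ for $n$ in a given piece, for integers $a,b,c$ depending on the piece. *)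

From Stdlib Require Import Reals ZArith List ClassicalEpsilon.
Open Scope R_scope.

Definition phi : R := (1 + sqrt 5) / 2.

(* floor: [up x] is the unique integer with x < up x <= x + 1 *)
Definition Zfloor (x : R) : Z := (up x - 1)%Z.

Fixpoint Fib (n : nat) : Z :=
  match n with
  | O => 0%Z
  | S m => match m with
           | O => 1%Z
           | S k => (Fib m + Fib k)%Z
           end
  end.

(* positive integers = the paper's N = {1,2,...} *)
Definition posZ (n : Z) : Prop := (0 < n)%Z.

Definition Rset (i : nat) (j : Z) (m : Z) : Prop :=
  exists n : Z, (0 < n)%Z /\
    m = (Fib (S i) * Zfloor (IZR n * phi) + Fib i * n - j)%Z.

(* p is a bijection of N = {1,2,...} (values outside N are irrelevant) *)
Definition perm_of_N (p : Z -> Z) : Prop :=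
  (forall n, posZ n -> posZ (p n)) /\
  (forall n m, posZ n -> posZ m -> p n = p m -> n = m) /\
  (forall m, posZ m -> exists n, posZ n /\ p n = m).

(* a piece: (i, j, a, b, c) meaning pi(n) = floor((a phi + b) n + c) on R_{i,j} *)
Definition piece := (nat * Z * Z * Z * Z)%type.

Definition piece_set (q : piece) : Z -> Prop :=
  let '(i, j, _, _, _) := q in Rset i j.

Definition piece_rule (q : piece) (n : Z) : Z :=
  let '(_, _, a, b, c) := q in
  Zfloor ((IZR a * phi + IZR b) * IZR n + IZR c).

Definition default_piece : piece := (O, 0%Z, 0%Z, 0%Z, 0%Z).

Definition is_Rij_permutation (p : Z -> Z) : Prop :=
  perm_of_N p /\
  exists ps : list piece,
    (forall k, (k < length ps)%nat ->
       forall n, piece_set (nth k ps default_piece) n -> posZ n) /\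
    (forall n, posZ n ->
       exists k, (k < length ps)%nat /\ piece_set (nth k ps default_piece) n /\
         forall k', (k' < length ps)%nat ->
           piece_set (nth k' ps default_piece) n -> k' = k) /\
    (forall k, (k < length ps)%nat ->
       forall n, piece_set (nth k ps default_piece) n ->
         p n = piece_rule (nth k ps default_piece) n).

Definition has_order_two (p : Z -> Z) : Prop :=
  (forall n, posZ n -> p (p n) = n) /\ (exists n, posZ n /\ p n <> n).

(* the map f of the theorem; since R_{0,0} and R_{1,0} partition N,
   the second branch is the case n in R_{1,0} *)
Definition f41 (n : Z) : Z :=
  if excluded_middle_informative (Rset 0 0 n)
  then (Zfloor (phi * IZR n) + 1)%Z
  else Zfloor ((phi - 1) * IZR n).

(* R_{0,0} and R_{1,0} are the lower and upper Wythoff sequences a(n) = ⌊nφ⌋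
   and b(n) = ⌊nφ²⌋ = a(n) + n, which partition N by Beatty's theorem since
   1/φ + 1/φ² = 1.  With t = nφ - a(n) ∈ (0,1) and φ² = φ + 1 one gets
   φ a(n) = b(n) - (φ-1) t and (φ-1) b(n) = a(n) + (2-φ) t, so f exchanges
   a(n) and b(n), hence is an involution of N. *)

From Pilot Require Import Defs.
From Stdlib Require Import Reals ZArith List Lra Lia ClassicalEpsilon.
Open Scope R_scope.

(* [Reals] exports its own [Zfloor] and [Rset], shadowing those of [Defs]; the
   two floors are the same function, which lets Stdlib's floor lemmas apply. *)
Lemma Defs_Zfloor_eq : Defs.Zfloor = Zfloor.
Proof. reflexivity. Qed.

Lemma Rlt_mult_inv_of_lt_mult x y c : 0 < c -> x < y * c -> x * / c < y.
Proof.
  intros Hc H; apply Rmult_lt_reg_r with c; [exact Hc |].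
  rewrite Rmult_assoc, Rinv_l, Rmult_1_r by lra; exact H.
Qed.

Lemma Rlt_mult_inv_of_mult_lt x y c : 0 < c -> y * c < x -> y < x * / c.
Proof.
  intros Hc H; apply Rmult_lt_reg_r with c; [exact Hc |].
  rewrite Rmult_assoc, Rinv_l, Rmult_1_r by lra; exact H.
Qed.

Definition irrational (x : R) : Prop :=
  forall n m : Z, n <> 0%Z -> IZR n * x <> IZR m.

Lemma irrational_add_Z x k : irrational x -> irrational (x + IZR k).
Proof.
  intros Hx n m Hn E; apply (Hx n (m - n * k)%Z Hn).
  rewrite minus_IZR, mult_IZR, <- E; ring.
Qed.

Lemma Zfloor_lt_of_irrational x n :
  irrational x -> n <> 0%Z -> IZR (Zfloor (IZR n * x)) < IZR n * x.
Proof.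
  intros Hx Hn; destruct (Zfloor_bound (IZR n * x)) as [[Hlt | Heq] _]; auto.
  now destruct (Hx n _ Hn (eq_sym Heq)).
Qed.

Lemma Zfloor_hit_or_below x k n :
  (0 < k)%Z -> IZR n * x < IZR k + 1 ->
  (n <> 0%Z /\ Zfloor (IZR n * x) = k) \/ IZR n * x < IZR k.
Proof.
  intros Hk Hlt; destruct (Zfloor_bound (IZR n * x)) as [Hlo Hhi].
  assert (Hle : (Zfloor (IZR n * x) <= k)%Z)
    by (apply Zlt_succ_le; apply lt_IZR; rewrite succ_IZR; lra).
  destruct (Z.eq_dec (Zfloor (IZR n * x)) k) as [Hw | Hw].
  - left; split; auto; intros Hn0; subst n.
    rewrite Rmult_0_l, ZfloorZ in Hw; lia.
  - right; apply Rlt_le_trans with (IZR (Zfloor (IZR n * x)) + 1); [lra |].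
    rewrite <- succ_IZR; apply IZR_le; lia.
Qed.

Lemma last_multiple_below x k :
  1 < x -> irrational x -> (0 <= k)%Z ->
  exists n, (0 <= n)%Z /\ IZR n * x < IZR k + 1 < (IZR n + 1) * x.
Proof.
  intros Hx Hirr Hk; set (n := Zfloor ((IZR k + 1) / x)).
  destruct (Zfloor_bound ((IZR k + 1) / x)) as [Hlo Hhi]; fold n in Hlo, Hhi.
  assert (Hk1 : 0 < IZR k + 1) by (apply IZR_le in Hk; lra).
  assert (Hn : (0 <= n)%Z)
    by (apply Zfloor_lub; apply Rlt_le, Rdiv_lt_0_compat; lra).
  exists n; split; [exact Hn |].
  apply Rmult_le_compat_r with (r := x) in Hlo; [| lra].
  apply Rmult_lt_compat_r with (r := x) in Hhi; [| lra].
  unfold Rdiv in Hlo, Hhi; rewrite Rmult_assoc, Rinv_l, Rmult_1_r in Hlo, Hhi by lra.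
  split; [| lra].
  destruct Hlo as [Hlt | Heq]; auto.
  destruct (Z.eq_dec n 0) as [-> | Hn0]; [lra |].
  destruct (Hirr n (k + 1)%Z Hn0); rewrite plus_IZR; exact Heq.
Qed.

Section Beatty.

Variables r s : R.
Hypotheses (r_gt_1 : 1 < r) (s_gt_1 : 1 < s) (inv_sum : / r + / s = 1).
Hypotheses (r_irrational : irrational r) (s_irrational : irrational s).

Let inv_sum_scaled x : x * / r + x * / s = x.
Proof. rewrite <- Rmult_plus_distr_l, inv_sum; ring. Qed.

Lemma beatty_disjoint n m :
  (0 < n)%Z -> (0 < m)%Z -> Zfloor (IZR n * r) <> Zfloor (IZR m * s).
Proof.
  intros Hn Hm E; set (k := Zfloor (IZR m * s)) in E.
  pose proof (Zfloor_lt_of_irrational r n r_irrational ltac:(lia)) as Hn1.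
  pose proof (Zfloor_lt_of_irrational s m s_irrational ltac:(lia)) as Hm1.
  pose proof (Zfloor_bound (IZR n * r)) as Hn2.
  pose proof (Zfloor_bound (IZR m * s)) as Hm2.
  fold k in Hm1, Hm2; rewrite E in Hn1, Hn2.
  (* dividing k < n r < k + 1 and k < m s < k + 1 by r and s and adding
     gives k < n + m < k + 1 *)
  pose proof (Rlt_mult_inv_of_lt_mult (IZR k) (IZR n) r ltac:(lra) Hn1).
  pose proof (Rlt_mult_inv_of_lt_mult (IZR k) (IZR m) s ltac:(lra) Hm1).
  pose proof (Rlt_mult_inv_of_mult_lt (IZR k + 1) (IZR n) r ltac:(lra) ltac:(lra)).
  pose proof (Rlt_mult_inv_of_mult_lt (IZR k + 1) (IZR m) s ltac:(lra) ltac:(lra)).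
  pose proof (inv_sum_scaled (IZR k)); pose proof (inv_sum_scaled (IZR k + 1)).
  assert (Hlo : IZR k < IZR (n + m)) by (rewrite plus_IZR; lra).
  assert (Hhi : IZR (n + m) < IZR (k + 1)) by (rewrite !plus_IZR; lra).
  apply lt_IZR in Hlo; apply lt_IZR in Hhi; lia.
Qed.

Lemma beatty_cover k :
  (0 < k)%Z ->
  (exists n, (0 < n)%Z /\ k = Zfloor (IZR n * r)) \/
  (exists m, (0 < m)%Z /\ k = Zfloor (IZR m * s)).
Proof.
  intros Hk.
  destruct (last_multiple_below r k r_gt_1 r_irrational ltac:(lia))
    as (n & Hn & Hnlt & Hngt).
  destruct (last_multiple_below s k s_gt_1 s_irrational ltac:(lia))
    as (m & Hm & Hmlt & Hmgt).
  destruct (Zfloor_hit_or_below r k n Hk Hnlt) as [[Hn0 Hhit] | Hnbelow].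
  { left; exists n; split; [lia | auto]. }
  destruct (Zfloor_hit_or_below s k m Hk Hmlt) as [[Hm0 Hhit] | Hmbelow].
  { right; exists m; split; [lia | auto]. }
  (* n r < k < k + 1 < (n + 1) r and m s < k < k + 1 < (m + 1) s give
     k - 1 < n + m < k in the same way *)
  exfalso.
  pose proof (Rlt_mult_inv_of_mult_lt (IZR k) (IZR n) r ltac:(lra) Hnbelow).
  pose proof (Rlt_mult_inv_of_mult_lt (IZR k) (IZR m) s ltac:(lra) Hmbelow).
  pose proof (Rlt_mult_inv_of_lt_mult (IZR k + 1) (IZR n + 1) r ltac:(lra) Hngt).
  pose proof (Rlt_mult_inv_of_lt_mult (IZR k + 1) (IZR m + 1) s ltac:(lra) Hmgt).
  pose proof (inv_sum_scaled (IZR k)); pose proof (inv_sum_scaled (IZR k + 1)).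
  assert (Hlo : IZR (k - 1) < IZR (n + m)) by (rewrite minus_IZR, plus_IZR; lra).
  assert (Hhi : IZR (n + m) < IZR k) by (rewrite plus_IZR; lra).
  apply lt_IZR in Hlo; apply lt_IZR in Hhi; lia.
Qed.

End Beatty.

Lemma Z_square_mod_5_0 p : ((p * p) mod 5 = 0)%Z -> (p mod 5 = 0)%Z.
Proof.
  rewrite Z.mul_mod by lia; intros Hsq.
  assert (Hr : (0 <= p mod 5 < 5)%Z) by (apply Z.mod_pos_bound; lia).
  assert (Hcases : (p mod 5 = 0 \/ p mod 5 = 1 \/ p mod 5 = 2 \/
                    p mod 5 = 3 \/ p mod 5 = 4)%Z) by lia.
  destruct Hcases as [E | [E | [E | [E | E]]]]; rewrite E in Hsq; cbn in Hsq; lia.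
Qed.

Lemma Z_square_eq_5_square n p : (0 <= n)%Z -> (p * p = 5 * n * n)%Z -> n = 0%Z.
Proof.
  revert p; induction n as [n IH] using (well_founded_induction (Z.lt_wf 0)).
  intros p Hn E.
  assert (Hp : (p mod 5 = 0)%Z).
  { apply Z_square_mod_5_0; rewrite E, <- Z.mul_assoc, Z.mul_comm; apply Z_mod_mult. }
  destruct (Z.mod_divide p 5 ltac:(lia)) as [[q ->] _]; [exact Hp |].
  assert (Eq : (n * n = 5 * Z.abs q * Z.abs q)%Z)
    by (destruct (Z.abs_spec q) as [[_ ->] | [_ ->]]; nia).
  destruct (Z.eq_dec n 0) as [| Hn0]; [assumption |].
  assert (Hq : (0 <= Z.abs q < n)%Z) by (split; [lia | nia]).
  specialize (IH (Z.abs q) Hq n ltac:(lia) Eq); nia.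
Qed.

Lemma phi_irrational : irrational phi.
Proof.
  intros n m Hn E; unfold phi in E.
  pose proof (sqrt_sqrt 5 ltac:(lra)) as Hsqrt.
  assert (Hnsqrt : IZR n * sqrt 5 = IZR (2 * m - n))
    by (rewrite minus_IZR, mult_IZR; lra).
  assert (Hsq : IZR ((2 * m - n) * (2 * m - n)) = IZR (5 * n * n)).
  { rewrite !mult_IZR, <- Hnsqrt.
    transitivity (IZR n * IZR n * (sqrt 5 * sqrt 5)); [ring | rewrite Hsqrt; ring]. }
  apply eq_IZR in Hsq.
  apply Hn, Z.abs_0_iff, (Z_square_eq_5_square _ (2 * m - n)); [lia |].
  destruct (Z.abs_spec n) as [[_ ->] | [_ ->]]; lia.
Qed.

Lemma phi_sq : phi * phi = phi + 1.
Proof. unfold phi; pose proof (sqrt_sqrt 5 ltac:(lra)); lra. Qed.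

Lemma phi_bounds : 1.6 < phi < 1.65.
Proof.
  unfold phi; pose proof (sqrt_sqrt 5 ltac:(lra)); pose proof (sqrt_pos 5); nra.
Qed.

Lemma inv_phi_add_inv_phi_sq : / phi + / (phi + 1) = 1.
Proof.
  pose proof phi_bounds.
  assert (E : phi * (phi + 1) = phi + (phi + 1))
    by (rewrite Rmult_plus_distr_l, phi_sq; ring).
  apply (Rmult_eq_reg_r (phi * (phi + 1))); [| nra].
  transitivity (phi + (phi + 1)); [field; lra | rewrite E; ring].
Qed.

Definition lower_wythoff (n : Z) : Z := Zfloor (IZR n * phi).

Lemma Zfloor_mult_phi_add_1 n :
  Zfloor (IZR n * (phi + 1)) = (lower_wythoff n + n)%Z.
Proof.
  unfold lower_wythoff; rewrite Rmult_plus_distr_l, Rmult_1_r; apply Zfloor_addz.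
Qed.

Lemma lower_wythoff_frac n :
  n <> 0%Z -> 0 < IZR n * phi - IZR (lower_wythoff n) < 1.
Proof.
  intros Hn; unfold lower_wythoff.
  pose proof (Zfloor_bound (IZR n * phi)).
  pose proof (Zfloor_lt_of_irrational phi n phi_irrational Hn); lra.
Qed.

Lemma lower_wythoff_ge n : (0 <= n)%Z -> (n <= lower_wythoff n)%Z.
Proof.
  intros Hn; apply Zfloor_lub.
  pose proof phi_bounds; apply IZR_le in Hn; nra.
Qed.

Lemma Rset_0_0_iff m :
  Defs.Rset 0 0 m <-> exists n, (0 < n)%Z /\ m = lower_wythoff n.
Proof.
  unfold Defs.Rset, lower_wythoff; rewrite Defs_Zfloor_eq; cbn [Fib].
  split; intros (n & Hn & E); exists n; split; auto; lia.
Qed.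

Lemma Rset_1_0_iff m :
  Defs.Rset 1 0 m <-> exists n, (0 < n)%Z /\ m = (lower_wythoff n + n)%Z.
Proof.
  unfold Defs.Rset, lower_wythoff; rewrite Defs_Zfloor_eq; cbn [Fib].
  split; intros (n & Hn & E); exists n; split; auto; lia.
Qed.

Lemma phi_gt_1 : 1 < phi.
Proof. pose proof phi_bounds; lra. Qed.

Lemma phi_add_1_gt_1 : 1 < phi + 1.
Proof. pose proof phi_bounds; lra. Qed.

Lemma Rset_0_0_1_0_disjoint m : Defs.Rset 0 0 m -> Defs.Rset 1 0 m -> False.
Proof.
  rewrite Rset_0_0_iff, Rset_1_0_iff; intros (n & Hn & ->) (k & Hk & E).
  rewrite <- Zfloor_mult_phi_add_1 in E.
  exact (beatty_disjoint phi (phi + 1) phi_gt_1 phi_add_1_gt_1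
           inv_phi_add_inv_phi_sq phi_irrational
           (irrational_add_Z phi 1 phi_irrational) n k Hn Hk E).
Qed.

Lemma Rset_0_0_or_1_0 m : posZ m -> Defs.Rset 0 0 m \/ Defs.Rset 1 0 m.
Proof.
  intros Hm; rewrite Rset_0_0_iff, Rset_1_0_iff.
  destruct (beatty_cover phi (phi + 1) phi_gt_1 phi_add_1_gt_1
              inv_phi_add_inv_phi_sq phi_irrational
              (irrational_add_Z phi 1 phi_irrational) m Hm)
    as [(n & Hn & E) | (n & Hn & E)].
  - left; exists n; auto.
  - right; exists n; rewrite <- Zfloor_mult_phi_add_1; auto.
Qed.

Lemma f41_Rset_0_0 m : Defs.Rset 0 0 m -> f41 m = (Zfloor (phi * IZR m) + 1)%Z.
Proof.
  intros Hm; unfold f41; rewrite Defs_Zfloor_eq.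
  destruct (excluded_middle_informative _); tauto.
Qed.

Lemma f41_Rset_1_0 m : Defs.Rset 1 0 m -> f41 m = Zfloor ((phi - 1) * IZR m).
Proof.
  intros Hm; unfold f41; rewrite Defs_Zfloor_eq.
  destruct (excluded_middle_informative _) as [Hm' |]; [| reflexivity].
  destruct (Rset_0_0_1_0_disjoint m Hm' Hm).
Qed.

Lemma f41_lower_wythoff n :
  (0 < n)%Z -> f41 (lower_wythoff n) = (lower_wythoff n + n)%Z.
Proof.
  intros Hn; rewrite f41_Rset_0_0 by (apply Rset_0_0_iff; eauto).
  set (w := lower_wythoff n); set (t := IZR n * phi - IZR w).
  assert (Ht : 0 < t < 1) by exact (lower_wythoff_frac n ltac:(lia)).
  assert (E : phi * IZR w = IZR w + IZR n - (phi - 1) * t).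
  { unfold t; replace (IZR w) with (IZR n * phi - t) by (unfold t; ring).
    transitivity (IZR n * (phi * phi) - phi * t); [ring | rewrite phi_sq; ring]. }
  enough (Zfloor (phi * IZR w) = (w + n - 1)%Z) by lia.
  apply Zfloor_eq; rewrite E, minus_IZR, plus_IZR.
  pose proof phi_bounds; split; nra.
Qed.

Lemma f41_upper_wythoff n :
  (0 < n)%Z -> f41 (lower_wythoff n + n) = lower_wythoff n.
Proof.
  intros Hn; rewrite f41_Rset_1_0 by (apply Rset_1_0_iff; eauto).
  set (w := lower_wythoff n); set (t := IZR n * phi - IZR w).
  assert (Ht : 0 < t < 1) by exact (lower_wythoff_frac n ltac:(lia)).
  assert (E : (phi - 1) * IZR (w + n) = IZR w + (2 - phi) * t).
  { rewrite plus_IZR; replace (IZR w) with (IZR n * phi - t) by (unfold t; ring).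
    transitivity (IZR n * (phi * phi) - IZR n - (phi - 1) * t);
      [ring | rewrite phi_sq; ring]. }
  apply Zfloor_eq; rewrite E.
  pose proof phi_bounds; split; nra.
Qed.

Lemma f41_involutive m : posZ m -> posZ (f41 m) /\ f41 (f41 m) = m.
Proof.
  unfold posZ; intros Hm.
  destruct (Rset_0_0_or_1_0 m Hm) as [Hm' | Hm'];
    [apply Rset_0_0_iff in Hm' | apply Rset_1_0_iff in Hm'];
    destruct Hm' as (n & Hn & ->); pose proof (lower_wythoff_ge n ltac:(lia)).
  - rewrite f41_lower_wythoff, f41_upper_wythoff by exact Hn; split; [lia | reflexivity].
  - rewrite f41_upper_wythoff, f41_lower_wythoff by exact Hn; split; [lia | reflexivity].
Qed.

Lemma perm_of_N_of_involutive p :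
  (forall n, posZ n -> posZ (p n) /\ p (p n) = n) -> perm_of_N p.
Proof.
  intros Hp; split; [| split].
  - intros n Hn; apply Hp, Hn.
  - intros n m Hn Hm E.
    rewrite <- (proj2 (Hp n Hn)), <- (proj2 (Hp m Hm)), E; reflexivity.
  - intros m Hm; exists (p m); apply Hp, Hm.
Qed.

Lemma is_Rij_permutation_of_two_pieces p q1 q2 :
  perm_of_N p ->
  (forall n, piece_set q1 n -> posZ n) ->
  (forall n, piece_set q2 n -> posZ n) ->
  (forall n, posZ n -> piece_set q1 n \/ piece_set q2 n) ->
  (forall n, piece_set q1 n -> piece_set q2 n -> False) ->
  (forall n, piece_set q1 n -> p n = piece_rule q1 n) ->
  (forall n, piece_set q2 n -> p n = piece_rule q2 n) ->
  is_Rij_permutation p.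
Proof.
  intros Hperm Hpos1 Hpos2 Hcover Hdisj Hrule1 Hrule2.
  split; [exact Hperm |]; exists (q1 :: q2 :: nil).
  split; [| split].
  - intros [| [| k]] Hk; cbn in Hk |- *; auto; lia.
  - intros n Hn; destruct (Hcover n Hn) as [H1 | H2].
    + exists 0%nat; cbn; split; [lia | split; [exact H1 |]].
      intros [| [| k]] Hk H; cbn in Hk, H; [reflexivity | destruct (Hdisj n H1 H) | lia].
    + exists 1%nat; cbn; split; [lia | split; [exact H2 |]].
      intros [| [| k]] Hk H; cbn in Hk, H; [destruct (Hdisj n H H2) | reflexivity | lia].
  - intros [| [| k]] Hk; cbn in Hk |- *; auto; lia.
Qed.

Lemma f41_is_Rij_permutation : is_Rij_permutation f41.
Proof.
  apply (is_Rij_permutation_of_two_pieces f41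
           (0%nat, 0%Z, 1%Z, 0%Z, 1%Z) (1%nat, 0%Z, 1%Z, (-1)%Z, 0%Z));
    cbn [piece_set piece_rule].
  - exact (perm_of_N_of_involutive f41 f41_involutive).
  - intros m Hm; apply Rset_0_0_iff in Hm as (n & Hn & ->).
    pose proof (lower_wythoff_ge n ltac:(lia)); unfold posZ; lia.
  - intros m Hm; apply Rset_1_0_iff in Hm as (n & Hn & ->).
    pose proof (lower_wythoff_ge n ltac:(lia)); unfold posZ; lia.
  - exact Rset_0_0_or_1_0.
  - exact Rset_0_0_1_0_disjoint.
  - intros m Hm; rewrite f41_Rset_0_0 by exact Hm; rewrite Defs_Zfloor_eq.
    rewrite <- Zfloor_addz; f_equal; ring.
  - intros m Hm; rewrite f41_Rset_1_0 by exact Hm; rewrite Defs_Zfloor_eq.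
    f_equal; ring.
Qed.

Lemma f41_swap n a b :
  (0 < n)%Z -> IZR a < IZR n * phi < IZR a + 1 -> b = (a + n)%Z ->
  f41 a = b /\ f41 b = a.
Proof.
  intros Hn Ha ->.
  assert (Hw : lower_wythoff n = a) by (apply Zfloor_eq; lra).
  rewrite <- Hw; split; [apply f41_lower_wythoff | apply f41_upper_wythoff]; exact Hn.
Qed.

Lemma f41_first_values :
  map f41 (map Z.of_nat (seq 1 10)) =
    (2 :: 1 :: 5 :: 7 :: 3 :: 10 :: 4 :: 13 :: 15 :: 6 :: nil)%Z.
Proof.
  pose proof phi_bounds.
  destruct (f41_swap 1 1 2) as [F1 F2]; [lia | lra | lia |].
  destruct (f41_swap 2 3 5) as [F3 F5]; [lia | lra | lia |].
  destruct (f41_swap 3 4 7) as [F4 F7]; [lia | lra | lia |].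
  destruct (f41_swap 4 6 10) as [F6 F10]; [lia | lra | lia |].
  destruct (f41_swap 5 8 13) as [F8 _]; [lia | lra | lia |].
  destruct (f41_swap 6 9 15) as [F9 _]; [lia | lra | lia |].
  cbn [seq map Z.of_nat Pos.of_succ_nat Pos.succ].
  rewrite F1, F2, F3, F4, F5, F6, F7, F8, F9, F10; reflexivity.
Qed.

Lemma f41_has_order_two : has_order_two f41.
Proof.
  split.
  - intros n Hn; apply f41_involutive, Hn.
  - exists 1%Z; split; [unfold posZ; lia |].
    destruct (f41_swap 1 1 2) as [F1 _]; [lia | pose proof phi_bounds; lra | lia |].
    rewrite F1; discriminate.
Qed.

Theorem theorem4p1 :
  is_Rij_permutation f41 /\ has_order_two f41 /\
  List.map f41 (List.map Z.of_nat (List.seq 1 10)) =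
    (2 :: 1 :: 5 :: 7 :: 3 :: 10 :: 4 :: 13 :: 15 :: 6 :: nil)%Z.
Proof.
  exact (conj f41_is_Rij_permutation (conj f41_has_order_two f41_first_values)).
Qed.
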